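(* Let $P$ be any poset. Then there exists no strictly isotone map $f:\mathrm{ch}\text{-}\mathrm{Id}(P)\to P$. Consequently, there exists no embedding of posets $f:\mathrm{Id}(P)\to P$.
   Context: For a poset $P$ and a subset $X\subseteq P$, write $P\downarrow X=\{y\in P\mid \exists x\in X,\ y\le x\}$. A downset of $P$ is a subset $d$ with $x\le y\in d\Rightarrow x\in d$. An ideal of $P$ is a (possibly empty) upward directed downset of $P$ (upward directed: every two elements have a common upper bound in the set). $\mathrm{Id}(P)$ denotes the set of all ideals of $P$ (including $\emptyset$), partially ordered by inclusion. $\mathrm{ch}\text{-}\mathrm{Id}(P)$ denotes the subposet of $\mathrm{Id}(P)$ consisting of the ideals of the form $P\downarrow C$ with $C\subseteq P$ a chain (possibly empty). A map $f:P\to Q$ of posets is strictly isotone if $x<y$ in $P$ implies $f(x)<f(y)$ in $Q$. *)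

From mathcomp Require Import all_boot all_order.
Set Implicit Arguments. Unset Strict Implicit. Unset Printing Implicit Defensive.
Import Order.TTheory.
Local Open Scope order_scope.

Section PosetIdeals.
Context {d : Order.disp_t} {P : porderType d}.

Definition subset_of (X Y : P -> Prop) : Prop := forall x, X x -> Y x.

Definition psubset_of (X Y : P -> Prop) : Prop := subset_of X Y /\ ~ subset_of Y X.

Definition down_of (X : P -> Prop) : P -> Prop := fun y => exists x, X x /\ y <= x.

Definition is_downset (X : P -> Prop) : Prop :=
  forall x y : P, x <= y -> X y -> X x.

Definition up_directed (X : P -> Prop) : Prop :=
  forall x y : P, X x -> X y -> exists z, [/\ X z, x <= z & y <= z].

(* ideal: possibly empty upward directed downset *)
Definition is_ideal (X : P -> Prop) : Prop := is_downset X /\ up_directed X.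

Definition is_chain (C : P -> Prop) : Prop :=
  forall x y : P, C x -> C y -> x <= y \/ y <= x.

Definition is_ch_ideal (X : P -> Prop) : Prop :=
  is_ideal X /\ exists C, is_chain C /\ (forall y, X y <-> down_of C y).

End PosetIdeals.

(* Id(P) and ch-Id(P), ordered by inclusion of the underlying subsets *)
Definition Id_P {d : Order.disp_t} (P : porderType d) := {X : P -> Prop | is_ideal X}.
Definition chId_P {d : Order.disp_t} (P : porderType d) := {X : P -> Prop | is_ch_ideal X}.

Definition strictly_isotone_chId {d : Order.disp_t} {P : porderType d}
  (f : chId_P P -> P) : Prop :=
  forall X Y : chId_P P, psubset_of (proj1_sig X) (proj1_sig Y) -> (f X < f Y)%O.

Definition poset_embedding_Id {d : Order.disp_t} {P : porderType d}
  (f : Id_P P -> P) : Prop :=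
  forall X Y : Id_P P, subset_of (proj1_sig X) (proj1_sig Y) <-> (f X <= f Y)%O.

(* Let F C := f (P ↓ C) for chains C, and call a chain C dominated when every
   element of C lies strictly below F C.  Dominated chains are closed under
   unions of inclusion-chains, since F is monotone on chains, so by Zorn's
   lemma there is a maximal one, C.  But then C ∪ {F C} is again a dominated
   chain, strictly larger than C: the new point F C is not in P ↓ C, so
   F C < F (C ∪ {F C}).  An embedding of Id(P) restricts to a strictly isotone
   map on ch-Id(P), which gives the second half. *)
From mathcomp Require Import all_boot all_order.
From mathcomp Require Import boolp classical_sets.
Import Order.TTheory.
Local Open Scope classical_set_scope.
Local Open Scope order_scope.

Section ChainIdeals.
Context {d : Order.disp_t} {P : porderType d}.

Lemma chain_set0 : is_chain (@set0 P).
Proof. by []. Qed.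

Lemma chain_down_ch_ideal {C : set P} : is_chain C -> is_ch_ideal (down_of C).
Proof.
move=> hC; split; last by exists C.
split=> [x y xy [c [Cc yc]] | x y [c1 [Cc1 xc1]] [c2 [Cc2 yc2]]].
  by exists c; split=> //; apply: le_trans yc.
have [c1c2 | c2c1] := hC _ _ Cc1 Cc2.
  by exists c2; split; [exists c2 | apply: le_trans c1c2 |].
by exists c1; split; [exists c1 | | apply: le_trans c2c1].
Qed.

(* [P ↓ C] as an element of ch-Id(P); junk value [P ↓ ∅] when C is no chain. *)
Definition down_ch (C : set P) : chId_P P :=
  match pselect (is_chain C) with
  | left hC => exist _ (down_of C) (chain_down_ch_ideal hC)
  | right _ => exist _ (down_of set0) (chain_down_ch_ideal chain_set0)
  end.

Lemma down_chE {C : set P} : is_chain C -> proj1_sig (down_ch C) = down_of C.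
Proof. by rewrite /down_ch; case: pselect. Qed.

Lemma chId_val_inj (X Y : chId_P P) : proj1_sig X = proj1_sig Y -> X = Y.
Proof. by case: X => X ?; case: Y => Y ? /= XY; apply: eq_exist. Qed.

Lemma down_of_subset {A B : set P} : A `<=` B -> down_of A `<=` down_of B.
Proof. by move=> AB y [x [Ax yx]]; exists x; split=> //; apply: AB. Qed.

End ChainIdeals.

Section NoStrictlyIsotoneMap.
Context {d : Order.disp_t} {P : porderType d}.
Variable f : chId_P P -> P.
Hypothesis f_strict : strictly_isotone_chId f.

Let F (C : set P) : P := f (down_ch C).

Lemma f_down_ch_lt (A B : set P) : is_chain A -> is_chain B ->
  down_of A `<` down_of B -> F A < F B.
Proof. by move=> hA hB AB; apply: f_strict; rewrite !down_chE. Qed.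

Lemma f_down_ch_le (A B : set P) :
  is_chain A -> is_chain B -> A `<=` B -> F A <= F B.
Proof.
move=> hA hB AB; have dAB := down_of_subset AB.
have [dBA | ndBA] := pselect (down_of B `<=` down_of A); last first.
  by apply: ltW; apply: f_down_ch_lt.
rewrite /F (@chId_val_inj _ _ (down_ch A) (down_ch B)) //.
by rewrite !down_chE //; apply/seteqP; split.
Qed.

Definition dominated_chain (C : set P) : Prop :=
  is_chain C /\ forall x, C x -> x < F C.

Lemma dominated_chain_bigcup (K : set (set P)) :
  K `<=` dominated_chain -> total_on K subset ->
  dominated_chain (\bigcup_(A in K) A).
Proof.
move=> Kdom Ktot.
have hU : is_chain (\bigcup_(A in K) A).
  move=> x y [A KA Ax] [B KB By].
  have [AB | BA] := Ktot _ _ KA KB.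
    by apply: (proj1 (Kdom _ KB)) => //; apply: AB.
  by apply: (proj1 (Kdom _ KA)) => //; apply: BA.
split=> // x [A KA Ax]; have [hA Adom] := Kdom _ KA.
apply: lt_le_trans (Adom _ Ax) _.
by apply: f_down_ch_le => //; apply: bigcup_sup.
Qed.

Lemma dominated_chain_setU1 {C : set P} :
  dominated_chain C -> dominated_chain (F C |` C) /\ C `<` (F C |` C).
Proof.
move=> [hC Cdom].
have FC_notin : ~ down_of C (F C).
  by move=> [c [Cc Fc]]; have := lt_le_trans (Cdom _ Cc) Fc; rewrite ltxx.
have C_sub : C `<=` F C |` C by move=> x; right.
have FC_in : (F C |` C) (F C) by left.
have hC' : is_chain (F C |` C).
  move=> x y [-> | Cx] [-> | Cy]; [by left | right | left | exact: hC];
    exact/ltW/Cdom.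
have FC_lt : F C < F (F C |` C).
  apply: f_down_ch_lt => //; split; first exact: down_of_subset.
  by move=> /(_ (F C)) sub; apply/FC_notin/sub; exists (F C).
split; last by split=> // /(_ _ FC_in) CFC; apply: FC_notin; exists (F C).
by split=> // x [-> // | Cx]; apply: lt_trans (Cdom _ Cx) FC_lt.
Qed.

Lemma strictly_isotone_chId_absurd : False.
Proof.
have [C [Cdom Cmax]] := @Zorn_bigcup P dominated_chain dominated_chain_bigcup.
by have [C'dom CC'] := dominated_chain_setU1 Cdom; apply: Cmax CC' C'dom.
Qed.

End NoStrictlyIsotoneMap.

Lemma embedding_Id_strictly_isotone {d : Order.disp_t} {P : porderType d}
    (f : Id_P P -> P) : poset_embedding_Id f ->
  strictly_isotone_chId (fun X : chId_P P =>
    f (exist _ (proj1_sig X) (proj1 (proj2_sig X)))).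
Proof.
move=> f_emb [X hX] [Y hY] /= [XY nYX].
pose X' : Id_P P := exist _ X (proj1 hX).
pose Y' : Id_P P := exist _ Y (proj1 hY).
rewrite lt_neqAle (f_emb X' Y').1 // andbT.
by apply/eqP=> fXY; apply/nYX/(f_emb Y' X').2; rewrite fXY.
Qed.

Theorem theorem2p1 (d : Order.disp_t) (P : porderType d) :
  (~ exists f : chId_P P -> P, strictly_isotone_chId f) /\
  (~ exists f : Id_P P -> P, poset_embedding_Id f).
Proof.
split; first by case=> f /strictly_isotone_chId_absurd.
by case=> f /embedding_Id_strictly_isotone /strictly_isotone_chId_absurd.
Qed.
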